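(* In the simplified FaRMv2 protocol described in the context, let $T$ be a transaction with read timestamp $rts$, and let $R$ be an object in $T$'s read set which $T$ reads at version $v_R \le rts$. Then in this execution the object $R$ is never updated at a version (timestamp) lying in the interval $(v_R, rts)$.
   Context: Global time means the time at a distinguished clock master. Each machine has a local clock whose rate differs from that of global time by a relative factor of at most a known drift bound $\epsilon$. The function TIME() returns an interval $[L,U]$ such that the global time at the moment of the call lies in $[L,U]$. The function GET\_TS is: $[L,U] \gets \mathrm{TIME}()$; sleep for $(U-L)(1+\epsilon)$ units of local time; return $U$. The data consists of objects, each having a lock bit and a set of versions, each version tagged with a timestamp (the write timestamp of the transaction that wrote it). ReadAtTs$(R,ts)$: if $R$ is locked return NULL; otherwise return the version of $R$ with the highest timestamp $\le ts$, or NULL if none is available. LockAtTs$(R,ts)$: if $R$ is locked or $R$ has timestamp $\ge ts$ return NULL; otherwise lock $R$. A transaction with read set RSet and write set WSet executes ExecuteAndCommit(RSet, WSet): $rts \gets$ GET\_TS; for each $R\in$ RSet, if ReadAtTs$(R,rts)$ returns NULL then abort; if WSet is empty, commit (read-only transaction); otherwise for each $W\in$ WSet, if LockAtTs$(W,rts)$ returns NULL then abort; then $wts \gets$ GET\_TS (performed while holding the locks); then for each $R \in$ RSet $\setminus$ WSet, if $R$ is locked or $R$ has timestamp $> rts$, abort (validation failure); then install for each object in WSet a new version with timestamp $wts$, unlock all objects, and commit. Here $rts$ is the transaction's read timestamp and $wts$ its write timestamp; a version of an object written by a committed transaction carries that transaction's $wts$. *)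

From Stdlib Require Import Reals List.
Open Scope R_scope.

(* Operational model of the simplified FaRMv2 protocol.
   - Global time [gtime] and one local clock per machine.
   - Each object has a lock bit and a list of version timestamps.
   - Each transaction T runs ExecuteAndCommit(rset T, wset T) on machine
     [mach T]; its control state is a [phase].
   - Steps are atomic and arbitrarily interleaved; time advances between
     steps, with every local clock drifting by a relative factor <= eps. *)

Inductive phase (Obj : Type) : Type :=
| PStart
| PRtsSleep (L U c0 : R)                        (* in GET_TS for rts: TIME() gave [L,U]; local clock was c0 *)
| PRead (rts : R) (todo : list Obj)
| PLock (rts : R) (todo held : list Obj)
| PWtsSleep (rts : R) (held : list Obj) (L U c0 : R) (* in GET_TS for wts, holding locks *)
| PValidate (rts wts : R) (todo held : list Obj)(* validating RSet \ WSet *)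
| PInstall (wts : R) (todo : list Obj)
| PCommitted
| PAborted.
Arguments PStart {Obj}.
Arguments PRtsSleep {Obj}.
Arguments PRead {Obj}.
Arguments PLock {Obj}.
Arguments PWtsSleep {Obj}.
Arguments PValidate {Obj}.
Arguments PInstall {Obj}.
Arguments PCommitted {Obj}.
Arguments PAborted {Obj}.

Record state (Obj Txn Mach : Type) := mkState {
  gtime : R;
  clk : Mach -> R;
  locked : Obj -> bool;
  versions : Obj -> list R;
  phase_of : Txn -> phase Obj
}.
Arguments gtime {Obj Txn Mach}.
Arguments clk {Obj Txn Mach}.
Arguments locked {Obj Txn Mach}.
Arguments versions {Obj Txn Mach}.
Arguments phase_of {Obj Txn Mach}.

(* Observable events. [LRead T O v rts]: transaction T with read timestamp
   rts executed ReadAtTs(O, rts) and obtained the version with timestamp v.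
   [LInstall T O w]: T installed a new version of O with timestamp w. *)
Inductive label (Obj Txn : Type) : Type :=
| LTime
| LInternal (T : Txn)
| LRead (T : Txn) (O : Obj) (v rts : R)
| LInstall (T : Txn) (O : Obj) (w : R).
Arguments LTime {Obj Txn}.
Arguments LInternal {Obj Txn}.
Arguments LRead {Obj Txn}.
Arguments LInstall {Obj Txn}.

Section Protocol.
Variables (Obj Txn Mach : Type).
Variable eps : R.
Variable mach : Txn -> Mach.
Variables rset wset : Txn -> list Obj.

Notation st := (state Obj Txn Mach).

Definition frame_time (s s' : st) : Prop :=
  gtime s' = gtime s /\ clk s' = clk s.

Definition objs_same (s s' : st) : Prop :=
  locked s' = locked s /\ versions s' = versions s.

Definition set_phase (s s' : st) (T : Txn) (p : phase Obj) : Prop :=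
  phase_of s' T = p /\ forall T', T' <> T -> phase_of s' T' = phase_of s T'.

Definition release (s s' : st) (held : list Obj) : Prop :=
  versions s' = versions s /\
  forall O, (In O held -> locked s' O = false) /\
            (~ In O held -> locked s' O = locked s O).

Definition lock_one (s s' : st) (O : Obj) : Prop :=
  versions s' = versions s /\ locked s' O = true /\
  forall O', O' <> O -> locked s' O' = locked s O'.

Definition install_one (s s' : st) (O : Obj) (w : R) : Prop :=
  versions s' O = w :: versions s O /\
  (forall O', O' <> O -> versions s' O' = versions s O') /\
  locked s' O = false /\
  (forall O', O' <> O -> locked s' O' = locked s O').

(* GET_TS: after TIME() returned [L,U] at local time c0, the sleep of
   (U-L)(1+eps) local time units is over. *)
Definition sleep_done (s : st) (T : Txn) (L U c0 : R) : Prop :=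
  clk s (mach T) >= c0 + (U - L) * (1 + eps).

Inductive step : st -> label Obj Txn -> st -> Prop :=
| s_time s s' (d : R) :
    0 <= d -> gtime s' = gtime s + d ->
    (forall m, (1 - eps) * d <= clk s' m - clk s m <= (1 + eps) * d) ->
    objs_same s s' -> phase_of s' = phase_of s ->
    step s LTime s'
| s_start s s' T L U :
    phase_of s T = PStart -> L <= gtime s <= U ->
    set_phase s s' T (PRtsSleep L U (clk s (mach T))) ->
    objs_same s s' -> frame_time s s' -> step s (LInternal T) s'
| s_rts_wake s s' T L U c0 :
    phase_of s T = PRtsSleep L U c0 -> sleep_done s T L U c0 ->
    set_phase s s' T (PRead U (rset T)) ->
    objs_same s s' -> frame_time s s' -> step s (LInternal T) s'
| s_read_ok s s' T rts O todo v :
    phase_of s T = PRead rts (O :: todo) ->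
    locked s O = false -> In v (versions s O) -> v <= rts ->
    (forall v', In v' (versions s O) -> v' <= rts -> v' <= v) ->
    set_phase s s' T (PRead rts todo) ->
    objs_same s s' -> frame_time s s' -> step s (LRead T O v rts) s'
| s_read_abort s s' T rts O todo :
    phase_of s T = PRead rts (O :: todo) ->
    (locked s O = true \/ forall v', In v' (versions s O) -> rts < v') ->
    set_phase s s' T PAborted ->
    objs_same s s' -> frame_time s s' -> step s (LInternal T) s'
| s_read_done_ro s s' T rts :
    phase_of s T = PRead rts nil -> wset T = nil ->
    set_phase s s' T PCommitted ->
    objs_same s s' -> frame_time s s' -> step s (LInternal T) s'
| s_read_done_rw s s' T rts :
    phase_of s T = PRead rts nil -> wset T <> nil ->
    set_phase s s' T (PLock rts (wset T) nil) ->
    objs_same s s' -> frame_time s s' -> step s (LInternal T) s'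
| s_lock_ok s s' T rts O todo held :
    phase_of s T = PLock rts (O :: todo) held ->
    locked s O = false -> (forall v, In v (versions s O) -> v < rts) ->
    lock_one s s' O ->
    set_phase s s' T (PLock rts todo (O :: held)) ->
    frame_time s s' -> step s (LInternal T) s'
| s_lock_abort s s' T rts O todo held :
    phase_of s T = PLock rts (O :: todo) held ->
    (locked s O = true \/ exists v, In v (versions s O) /\ rts <= v) ->
    release s s' held -> set_phase s s' T PAborted ->
    frame_time s s' -> step s (LInternal T) s'
| s_wts_start s s' T rts held L U :
    phase_of s T = PLock rts nil held -> L <= gtime s <= U ->
    set_phase s s' T (PWtsSleep rts held L U (clk s (mach T))) ->
    objs_same s s' -> frame_time s s' -> step s (LInternal T) s'
| s_wts_wake s s' T rts held L U c0 :
    phase_of s T = PWtsSleep rts held L U c0 -> sleep_done s T L U c0 ->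
    set_phase s s' T (PValidate rts U (rset T) held) ->
    objs_same s s' -> frame_time s s' -> step s (LInternal T) s'
| s_val_skip s s' T rts wts O todo held :
    phase_of s T = PValidate rts wts (O :: todo) held -> In O (wset T) ->
    set_phase s s' T (PValidate rts wts todo held) ->
    objs_same s s' -> frame_time s s' -> step s (LInternal T) s'
| s_val_ok s s' T rts wts O todo held :
    phase_of s T = PValidate rts wts (O :: todo) held -> ~ In O (wset T) ->
    locked s O = false -> (forall v, In v (versions s O) -> v <= rts) ->
    set_phase s s' T (PValidate rts wts todo held) ->
    objs_same s s' -> frame_time s s' -> step s (LInternal T) s'
| s_val_abort s s' T rts wts O todo held :
    phase_of s T = PValidate rts wts (O :: todo) held -> ~ In O (wset T) ->
    (locked s O = true \/ exists v, In v (versions s O) /\ rts < v) ->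
    release s s' held -> set_phase s s' T PAborted ->
    frame_time s s' -> step s (LInternal T) s'
| s_val_done s s' T rts wts held :
    phase_of s T = PValidate rts wts nil held ->
    set_phase s s' T (PInstall wts held) ->
    objs_same s s' -> frame_time s s' -> step s (LInternal T) s'
| s_install s s' T wts O todo :
    phase_of s T = PInstall wts (O :: todo) ->
    install_one s s' O wts ->
    set_phase s s' T (PInstall wts todo) ->
    frame_time s s' -> step s (LInstall T O wts) s'
| s_install_done s s' T wts :
    phase_of s T = PInstall wts nil ->
    set_phase s s' T PCommitted ->
    objs_same s s' -> frame_time s s' -> step s (LInternal T) s'.

Inductive exec : st -> list (label Obj Txn) -> st -> Prop :=
| exec_nil s : exec s nil s
| exec_cons s a s1 l s2 : step s a s1 -> exec s1 l s2 -> exec s (a :: l) s2.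

(* initial states: no transaction started, no object locked;
   initial versions, global time and local clocks arbitrary *)
Definition init (s : st) : Prop :=
  (forall T, phase_of s T = PStart) /\ (forall O, locked s O = false).

End Protocol.

Arguments init {Obj Txn Mach}.
Arguments step {Obj Txn Mach}.
Arguments exec {Obj Txn Mach}.

From Stdlib Require Import Reals List Lra Classical.
Open Scope R_scope.

(* When T reads R, R is unlocked and [vR] is its newest version not above
   [rts], so no version present at that moment lies in [(vR, rts)].  Moreover
   global time has already passed [rts]: GET_TS returns the upper end [U] of a
   TIME() interval only after sleeping long enough, despite clock drift, for
   global time to exceed [U].  A version of R installed later comes from a
   transaction that locked R after the read, and so called TIME() for its
   write timestamp after the read; that timestamp is the upper end of an
   interval containing the global time of the call, hence at least [rts].
   Both facts are kept as an invariant of reachable states, for every read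
   performed so far. *)

Lemma NoDup_app_disjoint (A : Type) (l l' : list A) (x : A) :
  NoDup (l ++ l') -> In x l -> ~ In x l'.
Proof.
  induction l as [| y l IH]; simpl; [tauto |].
  intros Hnd [<- | Hx]; inversion Hnd as [| ? ? Hy Hnd']; subst.
  - intros Hx'; apply Hy, in_or_app; right; exact Hx'.
  - exact (IH Hnd' Hx).
Qed.

Section Invariants.
Variables (Obj Txn Mach : Type) (eps : R) (mach : Txn -> Mach).
Variables rset wset : Txn -> list Obj.

Notation st := (state Obj Txn Mach).
Notation step := (step eps mach rset wset).

(* Installing a version of an object releases its lock, so in [PInstall]
   the locks still held are those of the objects not yet installed. *)
Definition locks_of (p : phase Obj) : list Obj :=
  match p with
  | PLock _ _ held | PWtsSleep _ held _ _ _ | PValidate _ _ _ held => held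
  | PInstall _ todo => todo
  | _ => nil
  end.

(* The [U] of a pending GET_TS is the write timestamp to be. *)
Definition wts_above (p : phase Obj) (r : R) : Prop :=
  match p with
  | PWtsSleep _ _ _ U _ => r <= U
  | PValidate _ wts _ _ | PInstall wts _ => r <= wts
  | _ => True
  end.

(* During the sleep of GET_TS, the local time elapsed since TIME() returned
   [[L, U]] is at most [1 + eps] times the global time elapsed since [L];
   hence when the sleep is over, global time is past [U]. *)
Definition phase_clock_ok (s : st) (T : Txn) (p : phase Obj) : Prop :=
  match p with
  | PRtsSleep L _ c0 => clk s (mach T) - c0 <= (1 + eps) * (gtime s - L)
  | PRead rts _ => rts <= gtime s
  | _ => True
  end.

Definition clock_sound (s : st) : Prop :=
  forall T, phase_clock_ok s T (phase_of s T).

Record lock_discipline (s : st) : Prop := {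
  held_locked : forall T O, In O (locks_of (phase_of s T)) -> locked s O = true;
  held_nodup : forall T, NoDup (locks_of (phase_of s T));
  held_excl : forall T1 T2 O, In O (locks_of (phase_of s T1)) ->
              In O (locks_of (phase_of s T2)) -> T1 = T2
}.

Definition read_stable (s : st) (O : Obj) (v r : R) : Prop :=
  r <= gtime s /\ (forall w, In w (versions s O) -> ~ (v < w < r)) /\
  (forall T, In O (locks_of (phase_of s T)) -> wts_above (phase_of s T) r).

Definition label_sound (s : st) (a : label Obj Txn) : Prop :=
  match a with
  | LRead _ o v r => read_stable s o v r
  | LInstall _ o w => In w (versions s o)
  | _ => True
  end.

Definition sound (s : st) (past : list (label Obj Txn)) : Prop :=
  clock_sound s /\ lock_discipline s /\ Forall (label_sound s) past.

Lemma set_phase_all (P : Txn -> phase Obj -> Prop) (s s' : st) T p :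
  set_phase _ _ _ s s' T p -> P T p ->
  (forall T', T' <> T -> P T' (phase_of s T')) ->
  forall T', P T' (phase_of s' T').
Proof.
  intros [HT Hother] HP Hrest T'.
  destruct (classic (T' = T)) as [-> | ne].
  - rewrite HT; exact HP.
  - rewrite (Hother T' ne); auto.
Qed.

Lemma step_gtime_le s a s' : step s a s' -> gtime s <= gtime s'.
Proof.
  destruct 1;
    try match goal with H : frame_time _ _ _ _ _ |- _ => destruct H as [-> _] end;
    lra.
Qed.

Lemma step_versions s a s' O :
  step s a s' ->
  versions s' O = versions s O \/
  exists T w todo, phase_of s T = PInstall w (O :: todo) /\
                   versions s' O = w :: versions s O.
Proof.
  destruct 1 as [| | | | | | | | | | | | | | | ? ? T w O' todo Hph (HvO & Hvo & _) | ];
    try match goal with H : objs_same _ _ _ _ _ |- _ => destruct H as [_ Hv]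
                      | H : lock_one _ _ _ _ _ _ |- _ => destruct H as [Hv _]
                      | H : release _ _ _ _ _ _ |- _ => destruct H as [Hv _] end;
    try (left; rewrite Hv; reflexivity).
  destruct (classic (O = O')) as [-> | ne].
  - right; exists T, w, todo; auto.
  - left; auto.
Qed.

Lemma step_wts_above s a s' O r :
  step s a s' -> r <= gtime s ->
  (forall T, In O (locks_of (phase_of s T)) -> wts_above (phase_of s T) r) ->
  forall T, In O (locks_of (phase_of s' T)) -> wts_above (phase_of s' T) r.
Proof.
  intros Hs Hr Hwts.
  destruct Hs as [? ? ? ? ? ? ? Hph | | | | | | | | | | | | | | | |].
  { rewrite Hph; exact Hwts. }
  all: match goal with
       | Hset : set_phase _ _ _ _ _ ?T _, Hold : phase_of _ ?T = _ |- _ =>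
           apply (set_phase_all (fun T q => In O (locks_of q) -> wts_above q r)
                                _ _ _ _ Hset);
           [ specialize (Hwts T); rewrite Hold in Hwts; simpl in *
           | intros; apply Hwts; assumption ]
       end.
  all: try (intros; exact I).
  all: try (intros Hin; apply Hwts; simpl; auto).
  (* s_wts_start: the write timestamp to be is above the current time *)
  intros _; match goal with H : _ <= gtime _ <= _ |- _ => destruct H end; lra.
Qed.

Lemma read_stable_step s a s' O v r :
  step s a s' -> read_stable s O v r -> read_stable s' O v r.
Proof.
  intros Hs (Hr & Hgap & Hwts).
  pose proof (step_gtime_le _ _ _ Hs) as Hg.
  split; [lra | split; [| exact (step_wts_above _ _ _ _ _ Hs Hr Hwts)]].
  intros w Hw.
  destruct (step_versions _ _ _ O Hs) as [Hv | (T & w' & todo & Hph & Hv)];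
    rewrite Hv in Hw; [exact (Hgap w Hw) |].
  destruct Hw as [<- | Hw]; [| exact (Hgap w Hw)].
  assert (Hle : r <= w').
  { specialize (Hwts T); rewrite Hph in Hwts; apply Hwts; left; reflexivity. }
  lra.
Qed.

Lemma label_sound_step s a s' b :
  step s a s' -> label_sound s b -> label_sound s' b.
Proof.
  intros Hs; destruct b as [| | ? o v r | ? o w]; simpl; auto.
  - apply read_stable_step with (1 := Hs).
  - destruct (step_versions _ _ _ o Hs) as [-> | (? & ? & ? & _ & ->)]; simpl; auto.
Qed.

Lemma label_sound_new s a s' :
  step s a s' -> clock_sound s -> lock_discipline s -> label_sound s' a.
Proof.
  intros Hs Hclk LD.
  destruct Hs as [| | | s s' T rts O todo v Hph Hunl _ _ Hmax Hset [_ Hvers] [Hg _]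
                 | | | | | | | | | | | | ? ? T wts O todo _ (HvO & _) _ _ | ];
    simpl; auto.
  - split; [| split].
    + rewrite Hg; specialize (Hclk T); rewrite Hph in Hclk; exact Hclk.
    + rewrite Hvers; intros w Hw Hlt; specialize (Hmax w Hw); lra.
    + apply (set_phase_all (fun T q => In O (locks_of q) -> wts_above q rts)
                           _ _ _ _ Hset).
      * simpl; tauto.
      * intros T' _ Hin; rewrite (held_locked _ LD T' O Hin) in Hunl; discriminate.
  - rewrite HvO; left; reflexivity.
Qed.

Lemma lock_discipline_release s s' T p l :
  lock_discipline s -> (forall O, ~ In O l -> locked s' O = locked s O) ->
  set_phase _ _ _ s s' T p -> locks_of (phase_of s T) = l ++ locks_of p ->
  lock_discipline s'.
Proof.
  intros LD Hlocks Hset Hsplit.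
  assert (Hsub : forall T' O, In O (locks_of (phase_of s' T')) ->
                              In O (locks_of (phase_of s T'))).
  { apply (set_phase_all (fun T' q => forall O, In O (locks_of q) ->
                                         In O (locks_of (phase_of s T'))) _ _ _ _ Hset).
    - intros O Hin; rewrite Hsplit; apply in_or_app; right; exact Hin.
    - auto. }
  split.
  - intros T' O Hin.
    rewrite Hlocks; [exact (held_locked _ LD T' O (Hsub T' O Hin)) |].
    intros Hl.
    assert (HT : T = T').
    { apply (held_excl _ LD T T' O); [rewrite Hsplit; apply in_or_app; left |]; auto. }
    subst T'; destruct Hset as [HT _]; rewrite HT in Hin.
    pose proof (held_nodup _ LD T) as Hnd; rewrite Hsplit in Hnd.
    exact (NoDup_app_disjoint _ _ _ _ Hnd Hl Hin).
  - apply (set_phase_all (fun _ q => NoDup (locks_of q)) _ _ _ _ Hset).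
    + apply NoDup_app_remove_l with l; rewrite <- Hsplit; apply (held_nodup _ LD).
    + intros; apply (held_nodup _ LD).
  - intros T1 T2 O H1 H2; exact (held_excl _ LD T1 T2 O (Hsub _ _ H1) (Hsub _ _ H2)).
Qed.

Lemma lock_discipline_acquire s s' T p O :
  lock_discipline s -> locked s O = false -> lock_one _ _ _ s s' O ->
  set_phase _ _ _ s s' T p -> locks_of p = O :: locks_of (phase_of s T) ->
  lock_discipline s'.
Proof.
  intros LD Hfree (_ & HO & Hother) Hset Hp.
  assert (Hnot_held : forall T', ~ In O (locks_of (phase_of s T'))).
  { intros T' Hin; rewrite (held_locked _ LD T' O Hin) in Hfree; discriminate. }
  assert (Hnew : forall T' O', In O' (locks_of (phase_of s' T')) ->
                 (T' = T /\ O' = O) \/ In O' (locks_of (phase_of s T'))).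
  { apply (set_phase_all (fun T' q => forall O', In O' (locks_of q) ->
             (T' = T /\ O' = O) \/ In O' (locks_of (phase_of s T'))) _ _ _ _ Hset).
    - rewrite Hp; intros O' [<- | Hin]; auto.
    - auto. }
  split.
  - intros T' O' Hin; destruct (classic (O' = O)) as [-> | ne]; [exact HO |].
    rewrite (Hother O' ne).
    destruct (Hnew T' O' Hin) as [[_ E] | Hold]; [contradiction |].
    exact (held_locked _ LD T' O' Hold).
  - apply (set_phase_all (fun _ q => NoDup (locks_of q)) _ _ _ _ Hset).
    + rewrite Hp; constructor; [apply Hnot_held | apply (held_nodup _ LD)].
    + intros; apply (held_nodup _ LD).
  - intros T1 T2 O' H1 H2.
    destruct (Hnew T1 O' H1) as [[-> E1] | H1'], (Hnew T2 O' H2) as [[-> E2] | H2'];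
      try subst O'; try reflexivity.
    + destruct (Hnot_held T2 H2').
    + destruct (Hnot_held T1 H1').
    + exact (held_excl _ LD T1 T2 O' H1' H2').
Qed.

Lemma lock_discipline_step s a s' :
  step s a s' -> lock_discipline s -> lock_discipline s'.
Proof.
  intros Hs LD.
  destruct Hs as [? ? ? ? ? ? [Hl _] Hph | | | | | | |
                  ? ? T ? O ? ? Hold Hfree _ Hlock Hset _
                  | ? ? T ? ? ? ? Hold _ [_ Hrel] Hset _ | | | |
                  | ? ? T ? ? ? ? ? Hold _ _ [_ Hrel] Hset _ |
                  | ? ? T ? O ? Hold (_ & _ & _ & Hlo) Hset _ | ];
    try match goal with
        | Hobj : objs_same _ _ _ _ _, Hset : set_phase _ _ _ _ _ ?T _,
          Hold : phase_of _ ?T = _ |- _ =>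
            destruct Hobj as [Hl _];
            apply (lock_discipline_release _ _ T _ nil LD
                     (fun O _ => f_equal (fun f => f O) Hl) Hset);
            rewrite Hold; reflexivity
        end.
  - destruct LD as [Hlk Hnd Hex]; split; rewrite ?Hph, ?Hl; assumption.
  - apply (lock_discipline_acquire _ _ T _ O LD Hfree Hlock Hset); rewrite Hold; reflexivity.
  - apply (lock_discipline_release _ _ T _ _ LD (fun O => proj2 (Hrel O)) Hset).
    rewrite Hold; symmetry; apply app_nil_r.
  - apply (lock_discipline_release _ _ T _ _ LD (fun O => proj2 (Hrel O)) Hset).
    rewrite Hold; symmetry; apply app_nil_r.
  - assert (Hothers : forall O', ~ In O' (O :: nil) -> locked s' O' = locked s O').
    { intros O' Hn; apply Hlo; intros ->; apply Hn; left; reflexivity. }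
    apply (lock_discipline_release _ _ T _ _ LD Hothers Hset); rewrite Hold; reflexivity.
Qed.

Lemma clock_sound_step s a s' :
  0 <= eps -> step s a s' -> clock_sound s -> clock_sound s'.
Proof.
  intros He Hs Hclk.
  destruct Hs as [? ? d Hd Hg Hdrift _ Hph | | | | | | | | | | | | | | | |].
  { intros T; rewrite Hph; specialize (Hclk T); unfold phase_clock_ok in *.
    destruct (phase_of s T); auto; rewrite Hg; [specialize (Hdrift (mach T)); nra | lra]. }
  all: match goal with
       | Hfr : frame_time _ _ _ _ _, Hset : set_phase _ _ _ _ _ ?T _,
         Hold : phase_of _ ?T = _ |- _ =>
           assert (Hsame : phase_clock_ok s' = phase_clock_ok s)
             by (destruct Hfr as [Hg Hc]; unfold phase_clock_ok; rewrite Hg, Hc; reflexivity);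
           unfold clock_sound; rewrite Hsame;
           apply (set_phase_all _ _ _ _ _ Hset); [| intros; apply Hclk];
           specialize (Hclk T); rewrite Hold in Hclk; simpl in *
       end.
  all: try exact I.
  - nra.
  - unfold sleep_done in *; nra.
  - exact Hclk.
Qed.

Lemma sound_init s : init s -> sound s nil.
Proof.
  intros [Hstart _]; split; [| split].
  - intros T; rewrite Hstart; exact I.
  - split.
    + intros T O; rewrite Hstart; intros [].
    + intros T; rewrite Hstart; constructor.
    + intros T1 T2 O; rewrite Hstart; intros [].
  - constructor.
Qed.

Lemma sound_step s a s' past :
  0 <= eps -> step s a s' -> sound s past -> sound s' (past ++ a :: nil).
Proof.
  intros He Hs (Hclk & LD & Hpast); split; [| split].
  - exact (clock_sound_step _ _ _ He Hs Hclk).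
  - exact (lock_discipline_step _ _ _ Hs LD).
  - apply Forall_app; split.
    + apply (Forall_impl _ (fun b => label_sound_step s a s' b Hs) Hpast).
    + constructor; [exact (label_sound_new _ _ _ Hs Hclk LD) | constructor].
Qed.

Lemma sound_exec s l s' past :
  0 <= eps -> exec eps mach rset wset s l s' -> sound s past -> sound s' (past ++ l).
Proof.
  intros He Hx; revert past.
  induction Hx as [s | s a s1 l s2 Hs _ IH]; intros past Hsound.
  - rewrite app_nil_r; exact Hsound.
  - replace (past ++ a :: l) with ((past ++ a :: nil) ++ l)
      by (rewrite <- app_assoc; reflexivity).
    exact (IH _ (sound_step _ _ _ _ He Hs Hsound)).
Qed.

End Invariants.

Theorem lemma2 (Obj Txn Mach : Type) (eps : R) (mach : Txn -> Mach)
    (rset wset : Txn -> list Obj)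
    (s0 s : state Obj Txn Mach) (labs : list (label Obj Txn))
    (T : Txn) (Rob : Obj) (vR rts : R) :
  0 <= eps ->
  init s0 ->
  exec eps mach rset wset s0 labs s ->
  In (LRead T Rob vR rts) labs ->
  forall (T' : Txn) (w : R), In (LInstall T' Rob w) labs -> ~ (vR < w < rts).
Proof.
  intros He Hinit Hx Hread T' w Hinst.
  destruct (sound_exec _ _ _ _ _ _ _ _ _ _ nil He Hx (sound_init _ _ _ _ _ _ Hinit))
    as (_ & _ & Hlabels).
  rewrite Forall_forall in Hlabels.
  destruct (Hlabels _ Hread) as (_ & Hgap & _).
  exact (Hgap w (Hlabels _ Hinst)).
Qed.
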